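(* There is a countable subset $E\subset\mathbb{C}$ containing $1,q^{-2},q^{-4},\dots$ with the following property: for every $t\in\mathbb{C}\setminus E$ there is a countable union $X$ of algebraic hypersurfaces in $\mathbb{C}^{2n+1}$ such that for every $(c_0,\dots,c_n,t_0,\dots,t_{n-1})\in\mathbb{C}^{2n+1}\setminus X$ with $c_n\neq0$, the $g_t$-twisted trace $T$ on $\mathcal{A}_+$ (for the parameter $P(z)=\sum_{i=0}^nc_iz^i$) determined by $T(Z^i)=t_i$, $0\le i\le n-1$, is nondegenerate.
   Context: Let $q\in\mathbb{C}$ with $0<|q|<1$ and $n\ge2$. For $P\in\mathbb{C}[z]$ of degree $n$, $\mathcal{A}_P$ is generated by $u,v,Z,Z^{-1}$ with relations $ZZ^{-1}=Z^{-1}Z=1$, $ZuZ^{-1}=q^2u$, $ZvZ^{-1}=q^{-2}v$, $uv=P(q^{-1}Z)$, $vu=P(qZ)$, and $\mathcal{A}_+$ is its subalgebra generated by $u,v,Z$, with basis $Z^iu^j,Z^iv^j$ ($i,j\ge0$) and filtration $F_k=\operatorname{span}\{Z^iu^j,Z^iv^j: 2i+nj\le k\}$. $g_t$ is the automorphism $u\mapsto tu$, $v\mapsto t^{-1}v$, $Z\mapsto Z$. A $g_t$-twisted trace on $\mathcal{A}_+$ is a linear $T$ with $T(ab)=T(bg_t(a))$ for $a,b\in\mathcal{A}_+$; for $t\ne q^{-2k}$ ($k\ge0$) such traces are uniquely determined by the arbitrary values $T(1),\dots,T(Z^{n-1})$. $T$ is nondegenerate if for every $k\ge0$ the bilinear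 form $(a,b)\mapsto T(ab)$ on $F_k$ is nondegenerate. *)

From HB Require Import structures.
From mathcomp Require Import all_boot all_order all_algebra.
From mathcomp Require Import complex.
From mathcomp Require Import freeg mpoly.
From mathcomp Require Import reals.

Set Implicit Arguments.
Unset Strict Implicit.
Unset Printing Implicit Defensive.

Import Order.TTheory GRing.Theory Num.Theory.
Local Open Scope ring_scope.

Section Aplus.
Variables (C : numClosedFieldType) (A : algType C).

Definition Peval (n : nat) (c : nat -> C) (w : A) : A :=
  \sum_(i < n.+1) c i *: w ^+ i.

Definition mono (u v Z : A) (m : nat * int) : A :=
  Z ^+ m.1 * (if (0 <= m.2)%R then u ^+ `|m.2|%N else v ^+ `|m.2|%N).

(* A (with distinguished elements u, v, Z) is the algebra A_+ for the parameters
   q and P(z) = \sum_{i<=n} c_i z^i: the defining relations hold and the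
   monomials Z^i u^j, Z^i v^j (i, j >= 0) form a basis of A. *)
Definition is_Aplus (q : C) (n : nat) (c : nat -> C) (u v Z : A) : Prop :=
  [/\ [/\ Z * u = q ^+ 2 *: (u * Z),
      Z * v = q ^- 2 *: (v * Z),
      u * v = Peval n c (q^-1 *: Z) &
      v * u = Peval n c (q *: Z)],
      (forall a : A, exists s : seq ((nat * int) * C),
          a = \sum_(x <- s) x.2 *: mono u v Z x.1) &
      (forall (s : seq (nat * int)) (k : nat * int -> C), uniq s ->
          \sum_(m <- s) k m *: mono u v Z m = 0 ->
          forall m, m \in s -> k m = 0)].

Definition is_gt (t : C) (u v Z : A) (g : A -> A) : Prop :=
  [/\ (forall a b, g (a + b) = g a + g b),
      (forall (x : C) a, g (x *: a) = x *: g a),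
      (forall a b, g (a * b) = g a * g b),
      g 1 = 1 &
      [/\ g u = t *: u, g v = t^-1 *: v & g Z = Z]].

Definition twisted_trace (g : A -> A) (T : A -> C) : Prop :=
  [/\ (forall a b, T (a + b) = T a + T b),
      (forall (x : C) a, T (x *: a) = x * T a) &
      (forall a b, T (a * b) = T (b * g a))].

Definition inF (n : nat) (u v Z : A) (k : nat) (a : A) : Prop :=
  exists s : seq ((nat * int) * C),
    all (fun x => (2 * x.1.1 + n * `|x.1.2|)%N <= k)%N s /\
    a = \sum_(x <- s) x.2 *: mono u v Z x.1.

Definition trace_nondegenerate (n : nat) (u v Z : A) (T : A -> C) : Prop :=
  forall k : nat, forall a, inF n u v Z k a ->
    (forall b, inF n u v Z k b -> T (a * b) = 0) -> a = 0.

End Aplus.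

From HB Require Import structures.
From mathcomp Require Import all_boot all_order all_algebra.
From mathcomp Require Import complex.
From mathcomp Require Import freeg mpoly.
From mathcomp Require Import reals.
From mathcomp Require Import zify ring.
Import Order.TTheory GRing.Theory Num.Theory.
Local Open Scope ring_scope.
Set Implicit Arguments.
Unset Strict Implicit.
Unset Printing Implicit Defensive.

(* The algebra A_+ is graded by the u-degree (deg u = 1, deg v = -1,
   deg Z = 0), and the twisted-trace identity forces T to vanish on every
   homogeneous component of nonzero degree.  Hence on F_k the form
   (a, b) |-> T(ab) pairs degree d only with degree -d, and the block of
   degree +-e is, up to invertible diagonal rescalings, the Hankel matrix
   H_e(N) = (T(Z^(i+b) u^e v^e))_(i,b<N).  So T is nondegenerate on F_k as
   soon as det H_e(N) != 0 for all e <= k and N <= k+1.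

   The entries of H_e are obtained from the moments mu_m = T(Z^m) by a
   recursion in e, and the moments obey a linear recurrence of order n whose
   leading coefficient is c_n * d_m with d_m != 0 as t is not exceptional.
   Clearing the powers of c_n, the numbers c_n^S det H_e(N) are values of
   polynomials in (c_0, .., c_n, t_0, .., t_(n-1)); their products over
   e <= k, N <= k+1 define the hypersurfaces X.  These polynomials are
   nonzero: at the parameters P(z) = (z-1)(z-q^(2L))z^(n-2),
   mu_m = sum_(l<L) t^l q^((2l+1)m), the Hankel matrix factors as V D V^T
   with V a Vandermonde matrix on the distinct nodes q^(2l+1) and D an
   invertible diagonal matrix. *)

Lemma skew_commute_pow (K : comPzRingType) (A : algType K) (x y : A) (s : K) :
  x * y = s *: (y * x) ->
  forall j m, x ^+ j * y ^+ m = s ^+ (j * m)%N *: (y ^+ m * x ^+ j).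
Proof.
move=> xy.
have xym m : x * y ^+ m = s ^+ m *: (y ^+ m * x).
  elim: m => [|m IH]; first by rewrite !expr0 mulr1 mul1r scale1r.
  rewrite exprSr mulrA IH -scalerAl -[y ^+ m * x * y]mulrA xy scalerAr scalerA.
  by rewrite -scalerAr mulrA -!exprSr.
elim=> [|j IH] m; first by rewrite mul0n !expr0 mul1r mulr1 scale1r.
have -> : x ^+ j.+1 * y ^+ m = x * (x ^+ j * y ^+ m) by rewrite exprS mulrA.
rewrite IH -scalerAr mulrA xym -scalerAl scalerA -mulrA -exprS.
by rewrite mulSn exprD mulrC.
Qed.

Lemma fixed_by_scalar_eq0 (K : idomainType) (x s : K) : s != 1 -> x = s * x -> x = 0.
Proof.
move=> s1 xE; apply/eqP; have : (1 - s) * x = 0 by rewrite mulrBl mul1r -xE subrr.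
by move/eqP; rewrite mulf_eq0 subr_eq0 eq_sym (negPf s1).
Qed.

Lemma int_nat_or_negS (d : int) : (exists k, d = k%:Z) \/ (exists k, d = - (k.+1)%:Z).
Proof. by case: d => k; [left|right]; exists k; rewrite ?NegzE. Qed.

Lemma int_neg_or_natS (d : int) : (exists k, d = - k%:Z) \/ (exists k, d = (k.+1)%:Z).
Proof.
case: d => [[|k]|k]; first by left; exists 0%N.
  by right; exists k.
by left; exists k.+1; rewrite NegzE.
Qed.

Lemma sum_regroup (V : nmodType) (K : eqType) (I : finType) (f : I -> nat * int)
   (s : seq ((nat * int) * K)) (H : (nat * int) * K -> V) :
  injective f -> (forall y, y \in s -> (exists i, f i = y.1) \/ H y = 0) ->
  \sum_(y <- s) H y = \sum_(i : I) \sum_(y <- s | y.1 == f i) H y.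
Proof.
move=> injf Hs; under [RHS]eq_bigr do rewrite big_mkcond.
rewrite exchange_big /= big_seq [RHS]big_seq; apply: eq_bigr => y ys.
rewrite -big_mkcond; have [[i0 fi0]|H0] := Hs y ys; last by rewrite H0 big1.
rewrite (big_pred1 i0) // => i /=; apply/eqP/eqP=> [E|->] //.
by apply: injf; rewrite fi0.
Qed.

Lemma sum_scale_eq0 (K : pzRingType) (V : lmodType K) (I : eqType)
    (s : seq (I * K)) (f : I -> V) :
  (forall m, \sum_(y <- s | y.1 == m) y.2 = 0) -> \sum_(y <- s) y.2 *: f y.1 = 0.
Proof.
move=> coef0.
have -> : \sum_(y <- s) y.2 *: f y.1 =
    \sum_(m <- undup [seq y.1 | y <- s]) (\sum_(y <- s | y.1 == m) y.2) *: f m.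
  under [RHS]eq_bigr do rewrite scaler_suml big_mkcond.
  rewrite exchange_big /=; apply: eq_big_seq => y ys.
  rewrite (bigD1_seq y.1) ?undup_uniq ?mem_undup ?map_f //= eqxx big1_seq ?addr0 //.
  by move=> m /andP [ym _]; rewrite eq_sym (negPf ym).
by rewrite big1 // => m _; rewrite coef0 scale0r.
Qed.

Lemma left_kernel_eq0 (K : fieldType) N (H : 'M[K]_N) (beta : 'I_N -> K) :
  \det H != 0 -> (forall b, \sum_j beta j * H j b = 0) -> forall j, beta j = 0.
Proof.
move=> dH Hb j; have HU : H \in unitmx by rewrite unitmxE unitfE.
pose r := \row_j beta j.
have r0 : r *m H = 0.
  by apply/rowP => b; rewrite !mxE -[RHS](Hb b); apply: eq_bigr => i _; rewrite mxE.
have : r = 0 by rewrite -(mulmxK HU r) r0 mul0mx.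
by move/rowP/(_ j); rewrite !mxE.
Qed.

Section SmallPowers.
Variables (K : numDomainType) (q : K).
Hypotheses (q0 : q != 0) (q_lt1 : `|q| < 1).

Lemma small_pow_neq1 a : (0 < a)%N -> q ^+ a != 1.
Proof.
move=> a0; apply/eqP => qa1; have : `|q ^+ a| < 1.
  by rewrite normrX exprn_ilt1 ?normr_ge0 // -lt0n.
by rewrite qa1 normr1 ltxx.
Qed.

Lemma small_pow_inj a b : q ^+ a = q ^+ b -> a = b.
Proof.
suff le_eq a' b' : (a' <= b')%N -> q ^+ a' = q ^+ b' -> a' = b'.
  by case: (leqP a b) => [/le_eq|/ltnW /le_eq ba /esym /ba]; first exact.
move=> ab qab; apply/eqP; rewrite eqn_leq ab /= leqNgt; apply/negP => ltab.
have qa0 : q ^+ a' != 0 by rewrite expf_neq0.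
have /eqP : q ^+ a' * q ^+ (b' - a') = q ^+ a' * 1 by rewrite -exprD subnKC // mulr1.
by rewrite (inj_eq (mulfI qa0)) (negPf (small_pow_neq1 _)) // subn_gt0.
Qed.

End SmallPowers.

(* The coefficient d_(m,i) = q^-i q^-2m - t q^i of c_i mu_(m+i) in the linear
   recurrence satisfied by the moments mu_m = T(Z^m). *)
Definition rec_coef (K : fieldType) (q t : K) (m i : nat) : K :=
  q^-1 ^+ i * (q ^- 2) ^+ m - t * q ^+ i.

(* hankel_val q n c mu e m expresses T(Z^m u^e v^e) through the moments mu:
   each factor u v = P(q^-1 Z) is moved to the left through u^e. *)
Fixpoint hankel_val (K : fieldType) (q : K) (n : nat) (c mu : nat -> K) (e m : nat)
    {struct e} : K :=
  if e is e'.+1 then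
    \sum_(i < n.+1) c i * (q^-1 ^+ i * (q ^- 2) ^+ (e' * i)%N)
                    * hankel_val q n c mu e' (m + i)%N
  else mu m.

Section TwistedTrace.
Variables (C : numClosedFieldType) (q t : C) (n : nat) (c : nat -> C).
Variables (A : algType C) (u v Z : A) (g : A -> A) (T : A -> C).
Hypothesis HA : is_Aplus q n c u v Z.
Hypothesis Hg : is_gt t u v Z g.
Hypothesis HT : twisted_trace g T.
Hypothesis q0 : q != 0.
Local Notation mon := (mono u v Z).

Lemma traceD a b : T (a + b) = T a + T b. Proof. by case: HT. Qed.
Lemma traceZ (x : C) a : T (x *: a) = x * T a. Proof. by case: HT. Qed.
Lemma trace_twist a b : T (a * b) = T (b * g a). Proof. by case: HT. Qed.
Lemma trace0 : T 0 = 0. Proof. by have := traceZ 0 0; rewrite scale0r mul0r. Qed.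
Lemma trace_sum (I : Type) (r : seq I) (P : pred I) (F : I -> A) :
  T (\sum_(i <- r | P i) F i) = \sum_(i <- r | P i) T (F i).
Proof. exact: (big_morph T traceD trace0). Qed.

Lemma gtM a b : g (a * b) = g a * g b. Proof. by case: Hg. Qed.
Lemma gtX a k : g (a ^+ k) = g a ^+ k.
Proof. by case: Hg => _ _ _ g1 _; elim: k => [|k IH]; rewrite ?g1 // !exprS gtM IH. Qed.
Lemma gtZ : g Z = Z. Proof. by case: Hg => _ _ _ _ []. Qed.
Lemma gtu : g u = t *: u. Proof. by case: Hg => _ _ _ _ []. Qed.
Lemma gtv : g v = t^-1 *: v. Proof. by case: Hg => _ _ _ _ []. Qed.

Lemma uZ : u * Z = q ^- 2 *: (Z * u).
Proof.
by case: HA => -[-> _ _ _] _ _; rewrite scalerA mulVf ?scale1r // expf_neq0.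
Qed.
Lemma vZ : v * Z = q ^+ 2 *: (Z * v).
Proof.
by case: HA => -[_ -> _ _] _ _; rewrite scalerA divff ?scale1r // expf_neq0.
Qed.
Lemma uv_expand : u * v = \sum_(i < n.+1) (c i * q^-1 ^+ i) *: Z ^+ i.
Proof.
case: HA => -[_ _ -> _] _ _; apply: eq_bigr => i _.
by rewrite exprZn scalerA.
Qed.
Lemma vu_expand : v * u = \sum_(i < n.+1) (c i * q ^+ i) *: Z ^+ i.
Proof.
case: HA => -[_ _ _ ->] _ _; apply: eq_bigr => i _.
by rewrite exprZn scalerA.
Qed.

Lemma uXZX j m : u ^+ j * Z ^+ m = (q ^- 2) ^+ (j * m)%N *: (Z ^+ m * u ^+ j).
Proof. exact: skew_commute_pow uZ j m. Qed.
Lemma vXZX j m : v ^+ j * Z ^+ m = (q ^+ 2) ^+ (j * m)%N *: (Z ^+ m * v ^+ j).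
Proof. exact: skew_commute_pow vZ j m. Qed.
Lemma uZX m : u * Z ^+ m = (q ^- 2) ^+ m *: (Z ^+ m * u).
Proof. by have := uXZX 1 m; rewrite !expr1 mul1n. Qed.
Lemma vZX m : v * Z ^+ m = (q ^+ 2) ^+ m *: (Z ^+ m * v).
Proof. by have := vXZX 1 m; rewrite !expr1 mul1n. Qed.

Lemma mono_u k m : mon (m, k%:Z) = Z ^+ m * u ^+ k.
Proof. by []. Qed.
Lemma mono_v k m : mon (m, - k%:Z) = Z ^+ m * v ^+ k.
Proof. by case: k => [|k]; rewrite /mono /= ?expr0. Qed.

Definition in_deg (d : int) (a : A) :=
  exists s : seq (nat * C), a = \sum_(y <- s) y.2 *: mon (y.1, d).

Lemma in_deg0 d : in_deg d 0.
Proof. by exists [::]; rewrite big_nil. Qed.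
Lemma in_degD d a b : in_deg d a -> in_deg d b -> in_deg d (a + b).
Proof. by move=> [s ->] [s' ->]; exists (s ++ s'); rewrite big_cat. Qed.
Lemma in_deg_scale d (x : C) a : in_deg d a -> in_deg d (x *: a).
Proof.
move=> [s ->]; exists [seq (y.1, x * y.2) | y <- s].
by rewrite big_map scaler_sumr; apply: eq_bigr => y _; rewrite scalerA.
Qed.
Lemma in_deg_mono d m : in_deg d (mon (m, d)).
Proof. by exists [:: (m, 1)]; rewrite big_seq1 scale1r. Qed.
Lemma in_deg_sum d (I : Type) (r : seq I) (P : pred I) (F : I -> A) :
  (forall i, P i -> in_deg d (F i)) -> in_deg d (\sum_(i <- r | P i) F i).
Proof. by move=> HF; apply: big_ind => //; [exact: in_deg0 | exact: in_degD]. Qed.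

Lemma in_deg_mull (w : A) d d' :
  (forall m, in_deg d' (w * mon (m, d))) -> forall a, in_deg d a -> in_deg d' (w * a).
Proof.
move=> Hm a [s ->]; rewrite mulr_sumr; apply: in_deg_sum => y _.
by rewrite -scalerAr; apply: in_deg_scale.
Qed.

Lemma in_degZ d a : in_deg d a -> in_deg d (Z * a).
Proof.
by apply: in_deg_mull => m; rewrite /mono /= mulrA -exprS; apply: in_deg_mono.
Qed.

Lemma in_degu d a : in_deg d a -> in_deg (d + 1) (u * a).
Proof.
apply: in_deg_mull => m; have [[k ->]|[k ->]] := int_nat_or_negS d.
  rewrite mono_u mulrA uZX -scalerAl -mulrA -exprS.
  have -> : k%:Z + 1 = (k.+1)%:Z by lia.
  by apply: in_deg_scale; rewrite -mono_u; apply: in_deg_mono.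
rewrite mono_v mulrA uZX -scalerAl; apply: in_deg_scale.
have -> : - (k.+1)%:Z + 1 = - k%:Z by lia.
rewrite exprS mulrA -(mulrA _ u) uv_expand mulr_sumr mulr_suml.
apply: in_deg_sum => i _; rewrite -scalerAr -scalerAl -exprD; apply: in_deg_scale.
by rewrite -mono_v; apply: in_deg_mono.
Qed.

Lemma in_degv d a : in_deg d a -> in_deg (d - 1) (v * a).
Proof.
apply: in_deg_mull => m; have [[k ->]|[k ->]] := int_neg_or_natS d.
  rewrite mono_v mulrA vZX -scalerAl -mulrA -exprS.
  have -> : - k%:Z - 1 = - (k.+1)%:Z by lia.
  by apply: in_deg_scale; rewrite -mono_v; apply: in_deg_mono.
rewrite mono_u mulrA vZX -scalerAl; apply: in_deg_scale.
have -> : (k.+1)%:Z - 1 = k%:Z by lia.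
rewrite exprS mulrA -(mulrA _ v) vu_expand mulr_sumr mulr_suml.
apply: in_deg_sum => i _; rewrite -scalerAr -scalerAl -exprD; apply: in_deg_scale.
by rewrite -mono_u; apply: in_deg_mono.
Qed.

Lemma in_degZX k d a : in_deg d a -> in_deg d (Z ^+ k * a).
Proof.
by elim: k => [|k IH] Ha; rewrite ?expr0 ?mul1r // exprS -mulrA; apply/in_degZ/IH.
Qed.
Lemma in_deguX k d a : in_deg d a -> in_deg (d + k%:Z) (u ^+ k * a).
Proof.
elim: k => [|k IH] Ha; first by rewrite expr0 mul1r addr0.
rewrite exprS -mulrA; have -> : d + (k.+1)%:Z = (d + k%:Z) + 1 by lia.
exact/in_degu/IH.
Qed.
Lemma in_degvX k d a : in_deg d a -> in_deg (d - k%:Z) (v ^+ k * a).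
Proof.
elim: k => [|k IH] Ha; first by rewrite expr0 mul1r subr0.
rewrite exprS -mulrA; have -> : d - (k.+1)%:Z = (d - k%:Z) - 1 by lia.
exact/in_degv/IH.
Qed.

Lemma in_deg_mono_mul i j d a : in_deg d a -> in_deg (j + d) (mon (i, j) * a).
Proof.
move=> Ha; have [[k ->]|[k ->]] := int_neg_or_natS j.
  by rewrite mono_v -mulrA addrC; apply/in_degZX/in_degvX.
by rewrite mono_u -mulrA addrC; apply/in_degZX/in_deguX.
Qed.

Hypothesis q2pow_neq1 : forall k, (0 < k)%N -> (q ^+ 2) ^+ k != 1.
Hypothesis t1 : t != 1.

(* T vanishes on the monomials of nonzero degree: moving one letter around
   with the twisted-trace identity multiplies the value by t^(+-1) or by a
   nontrivial power of q^2. *)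
Lemma trace_mono_eq0 i j : j != 0 -> T (mon (i, j)) = 0.
Proof.
move=> j0; have [[k Ej]|[k Ej]] := int_neg_or_natS j; rewrite {}Ej in j0 *.
  have k0 : (0 < k)%N by case: k j0.
  rewrite mono_v; case: i => [|i].
    rewrite expr0 mul1r; case: k k0 {j0} => // k _.
    apply: (@fixed_by_scalar_eq0 _ _ t^-1); first by rewrite invr_eq1.
    by rewrite [in LHS]exprS trace_twist gtv -scalerAr traceZ -exprSr.
  apply: (@fixed_by_scalar_eq0 _ _ ((q ^+ 2) ^+ k)); first exact: q2pow_neq1.
  have := vXZX k 1; rewrite expr1 muln1 => vkZ.
  rewrite [in LHS]exprS -mulrA trace_twist gtZ -mulrA vkZ -scalerAr traceZ.
  by rewrite mulrA -exprSr.
rewrite mono_u; case: i => [|i].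
  rewrite expr0 mul1r; apply: (@fixed_by_scalar_eq0 _ _ t) => //.
  by rewrite [in LHS]exprS trace_twist gtu -scalerAr traceZ -exprSr.
apply: (@fixed_by_scalar_eq0 _ _ ((q ^- 2) ^+ k.+1)).
  by rewrite exprVn invr_eq1 q2pow_neq1.
have := uXZX k.+1 1; rewrite expr1 muln1 => ukZ.
rewrite [in LHS]exprS -mulrA trace_twist gtZ -mulrA ukZ -scalerAr traceZ.
by rewrite mulrA -exprSr.
Qed.

Lemma trace_homog_eq0 d a : d != 0 -> in_deg d a -> T a = 0.
Proof.
move=> d0 [s ->]; rewrite trace_sum big1 // => y _.
by rewrite traceZ trace_mono_eq0 ?mulr0.
Qed.

Definition hankel_entry (e m : nat) := T (Z ^+ m * (u ^+ e * v ^+ e)).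

Lemma hankel_entry_rec e m : hankel_entry e.+1 m =
  \sum_(i < n.+1) c i * (q^-1 ^+ i * (q ^- 2) ^+ (e * i)%N) * hankel_entry e (m + i)%N.
Proof.
rewrite /hankel_entry (_ : u ^+ e.+1 * v ^+ e.+1 = u ^+ e * (u * v) * v ^+ e); last first.
  by rewrite exprSr exprS !mulrA.
rewrite uv_expand mulr_sumr mulr_suml mulr_sumr trace_sum; apply: eq_bigr => i _.
rewrite -scalerAr -scalerAl -scalerAr traceZ uXZX.
rewrite -(scalerAl _ (Z ^+ i * u ^+ e)) -(scalerAr _ (Z ^+ m)) traceZ.
by rewrite exprD !mulrA.
Qed.

Lemma hankel_entryE e m : hankel_entry e m = hankel_val q n c (fun m => T (Z ^+ m)) e m.
Proof.
elim: e m => [|e IH] m; first by rewrite /hankel_entry /= !expr0 !mulr1.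
by rewrite hankel_entry_rec; apply: eq_bigr => i _; rewrite IH.
Qed.

(* The moments obey sum_i c_i d_(m,i) mu_(m+i) = 0: compare T(u Z^m v),
   computed by moving u to the right, with its twisted-trace value. *)
Lemma moment_rec m :
  \sum_(i < n.+1) c i * rec_coef q t m i * T (Z ^+ (m + i)%N) = 0.
Proof.
have Tuv : T (Z ^+ m * (u * v)) = \sum_(i < n.+1) c i * q^-1 ^+ i * T (Z ^+ (m + i)).
  by rewrite uv_expand mulr_sumr trace_sum; apply: eq_bigr => i _; rewrite -scalerAr traceZ exprD.
have Tvu : T (Z ^+ m * (v * u)) = \sum_(i < n.+1) c i * q ^+ i * T (Z ^+ (m + i)).
  by rewrite vu_expand mulr_sumr trace_sum; apply: eq_bigr => i _; rewrite -scalerAr traceZ exprD.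
have E : (q ^- 2) ^+ m * T (Z ^+ m * (u * v)) = t * T (Z ^+ m * (v * u)).
  transitivity (T (u * (Z ^+ m * v))); first by rewrite -traceZ mulrA scalerAl -uZX mulrA.
  by rewrite trace_twist gtu -scalerAr traceZ mulrA.
rewrite -[RHS](subrr (t * T (Z ^+ m * (v * u)))) -{1}E Tuv Tvu !mulr_sumr -sumrB.
by apply: eq_bigr => i _; rewrite /rec_coef; ring.
Qed.

Lemma trace_pair_uv i b k : T (mon (i, k%:Z) * mon (b, - k%:Z)) =
  (q ^- 2) ^+ (k * b)%N * hankel_entry k (i + b)%N.
Proof.
rewrite mono_u mono_v mulrA -(mulrA (Z ^+ i)) uXZX.
rewrite -(scalerAr _ (Z ^+ i)) -(scalerAl _ (Z ^+ i * _)) traceZ.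
by rewrite /hankel_entry exprD !mulrA.
Qed.

Lemma trace_pair_vu i b k : T (mon (i, - k%:Z) * mon (b, k%:Z)) =
  t^-1 ^+ k * ((q ^- 2) ^+ (k * i)%N * hankel_entry k (b + i)%N).
Proof.
rewrite mono_v trace_twist gtM !gtX gtZ gtv exprZn -(scalerAr _ (Z ^+ i)).
by rewrite -(scalerAr _ (mon (b, k%:Z))) traceZ -mono_v trace_pair_uv.
Qed.

Definition hankel_mx e N := \matrix_(i < N, b < N) hankel_entry e (i + b)%N.

Hypothesis t0 : t != 0.

Lemma degree_block_eq0 d N (al : 'I_N -> C) : \det (hankel_mx `|d| N) != 0 ->
  (forall b : 'I_N, \sum_(j < N) al j * T (mon (j : nat, d) * mon (b : nat, - d)) = 0) ->
  forall j, al j = 0.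
Proof.
have q20 : q ^- 2 != 0 by rewrite invr_eq0 expf_neq0.
have [[k ->]|[k ->]] := int_nat_or_negS d => Hdet orth j.
  apply: (left_kernel_eq0 Hdet) => b; apply: (mulfI (expf_neq0 (k * b) q20)).
  rewrite mulr0 -[RHS](orth b) mulr_sumr; apply: eq_bigr => i _.
  by rewrite trace_pair_uv mxE /=; ring.
rewrite abszN in Hdet; apply/eqP; rewrite -(mulIr_eq0 _ (mulIf (expf_neq0 (k.+1 * j) q20))).
apply/eqP; move: j; apply: (left_kernel_eq0 Hdet) => b.
apply: (mulfI (expf_neq0 k.+1 (invr_neq0 t0))); rewrite mulr0 -[RHS](orth b) opprK.
rewrite mulr_sumr; apply: eq_bigr => i _.
by rewrite trace_pair_vu mxE addnC; ring.
Qed.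

Definition coef (s : seq ((nat * int) * C)) (m : nat * int) : C :=
  \sum_(y <- s | y.1 == m) y.2.

Lemma trace_pairing_block s d N w : in_deg (- d) w ->
  (forall y, y \in s -> y.1.2 = d -> y.1.1 < N)%N ->
  T ((\sum_(y <- s) y.2 *: mon y.1) * w) =
    \sum_(j < N) coef s (j : nat, d) * T (mon (j : nat, d) * w).
Proof.
move=> Hw bound; rewrite mulr_suml trace_sum.
rewrite (@sum_regroup _ _ _ (fun j : 'I_N => (j : nat, d))); last 2 first.
- by move=> j1 j2 [] /val_inj.
- move=> [[i d'] x] ys /=; case: (d' =P d) => [ed|ned]; [left|right].
    by exists (Ordinal (bound _ ys ed)); congr (_, _).
  rewrite -scalerAl traceZ (@trace_homog_eq0 (d' - d)) ?mulr0 //.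
    by rewrite subr_eq0; apply/eqP.
  exact: in_deg_mono_mul.
apply: eq_bigr => j _; rewrite /coef mulr_suml; apply: eq_bigr => y /eqP <-.
by rewrite -scalerAl traceZ.
Qed.

Lemma trace_nondeg_on_F (n0 : (0 < n)%N) k :
  (forall e N, (e <= k)%N -> (N <= k.+1)%N ->
     \det (\matrix_(i < N, b < N) hankel_val q n c (fun m => T (Z ^+ m)) e (i + b)%N) != 0) ->
  forall a, inF n u v Z k a -> (forall b, inF n u v Z k b -> T (a * b) = 0) -> a = 0.
Proof.
move=> Hdet a [s [/allP bounded ->]] orth; apply: sum_scale_eq0 => -[i d].
have [hk|hk] := leqP (2 * i + n * `|d|) k; last first.
  by rewrite big1_seq // => y /andP [/eqP ey ys]; have := bounded y ys; rewrite ey /=; lia.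
pose N := ((k - n * `|d|) %/ 2).+1.
have iN : (i < N)%N by rewrite /N; lia.
have dk : (`|d| <= k)%N by have := leq_pmull `|d| n0; lia.
have HdetN : \det (hankel_mx `|d| N) != 0.
  have := Hdet `|d|%N N dk ltac:(rewrite /N; lia); congr (\det _ != 0).
  by apply/matrixP => j b; rewrite !mxE hankel_entryE.
apply: (degree_block_eq0 (al := fun j : 'I_N => coef s (j : nat, d)) HdetN _ (Ordinal iN)).
move=> b; rewrite -(trace_pairing_block (in_deg_mono _ _)).
  apply: orth; exists [:: ((b : nat, - d), 1)]; rewrite big_seq1 scale1r; split => //.
  by rewrite /= andbT abszN; have := ltn_ord b; rewrite /N; lia.
by move=> y ys ey; have := bounded y ys; rewrite /= ey /N; lia.
Qed.

End TwistedTrace.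

(* Polynomials in the 2n+1 coordinates x_0, .., x_2n of the parameter space:
   x_i stands for c_i (i <= n) and x_(n+1+s) for the initial moment
   t_s = T(Z^s) (s < n). *)
Section HankelPolynomials.
Variables (K : fieldType) (q t : K) (n : nat).
Hypothesis n0 : (0 < n)%N.
Local Notation P := {mpoly K[(2 * n).+1]}.
Local Notation d := (rec_coef q t).

Definition xvar (j : nat) : P := 'X_(inord j).

(* The moment recurrence solved for mu_(m+n) and multiplied by c_n^(m+n):
   moment_polyf f m has value c_n^m mu_m (the fuel f > m bounds the recursion). *)
Fixpoint moment_polyf (f m : nat) : P :=
  if f is f'.+1 then
    (if (m < n)%N then xvar n ^+ m * xvar (n.+1 + m)
     else - \sum_(i < n) ((d (m - n) i / d (m - n) n)%:MP * xvar i
                 * xvar n ^+ (n.-1 - i) * moment_polyf f' (m - n + i)))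
  else 0.
Definition moment_poly m := moment_polyf m.+1 m.

Lemma moment_polyf_fuel f1 f2 m :
  (m < f1)%N -> (m < f2)%N -> moment_polyf f1 m = moment_polyf f2 m.
Proof.
elim: f1 f2 m => [|f1 IH] [|f2] m //= h1 h2.
case: ifP => // hm; congr (- _); apply: eq_bigr => i _; congr (_ * _).
by apply: IH; have := ltn_ord i; lia.
Qed.

Lemma moment_poly_small m : (m < n)%N -> moment_poly m = xvar n ^+ m * xvar (n.+1 + m).
Proof. by move=> hm; rewrite /moment_poly /= hm. Qed.

Lemma moment_poly_rec m : moment_poly (m + n) =
  - \sum_(i < n) ((d m i / d m n)%:MP * xvar i * xvar n ^+ (n.-1 - i) * moment_poly (m + i)).
Proof.
rewrite [LHS]/moment_poly /= ifF; last by apply/negbTE; rewrite -leqNgt leq_addl.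
rewrite addnK; congr (- _); apply: eq_bigr => i _; congr (_ * _).
by apply: moment_polyf_fuel; have := ltn_ord i; lia.
Qed.

Variables (x : 'I_(2 * n).+1 -> K) (mu : nat -> K).
Hypothesis mu_init : forall s, (s < n)%N -> mu s = x (inord (n.+1 + s)).
Hypothesis mu_rec : forall m, \sum_(i < n.+1) x (inord i) * d m i * mu (m + i)%N = 0.
Hypothesis d_lead : forall m, d m n != 0.
Local Notation cx := (fun i => x (inord i)).

Lemma moment_poly_eval m : (moment_poly m).@[x] = x (inord n) ^+ m * mu m.
Proof.
elim/ltn_ind: m => m IH; case: (ltnP m n) => hm.
  by rewrite moment_poly_small // mevalM rmorphXn /= /xvar !mevalXU mu_init.
rewrite -(subnK hm) in IH *; move: (m - n)%N IH => {hm}m IH.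
rewrite moment_poly_rec rmorphN rmorph_sum.
have := mu_rec m; rewrite big_ord_recr /= => /eqP; rewrite addr_eq0 => /eqP E.
rewrite (eq_bigr (fun i : 'I_n => x (inord n) ^+ (m + n).-1 / d m n *
   (x (inord i) * d m i * mu (m + i)%N))); last first.
  move=> i _; rewrite !mevalM mevalC rmorphXn /= /xvar !mevalXU IH; last first.
    by have := ltn_ord i; lia.
  have -> : (m + n).-1 = ((n.-1 - i) + (m + i))%N by have := ltn_ord i; lia.
  by move: (n.-1 - i)%N (m + i)%N => a b; rewrite exprD; ring.
rewrite -mulr_sumr E; have -> : (m + n = (m + n).-1.+1)%N by lia.
by rewrite exprS; field; apply: d_lead.
Qed.

Fixpoint hankel_poly (S e m : nat) {struct e} : P :=
  if e is e'.+1 then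
    \sum_(i < n.+1) (q^-1 ^+ i * (q ^- 2) ^+ (e' * i)%N)%:MP * xvar i * hankel_poly S e' (m + i)%N
  else xvar n ^+ (S - m)%N * moment_poly m.

Lemma hankel_poly_eval e m S : (m + n * e <= S)%N ->
  (hankel_poly S e m).@[x] = x (inord n) ^+ S * hankel_val q n cx mu e m.
Proof.
elim: e m S => [|e IH] m S hS /=.
  rewrite rmorphM rmorphXn /= /xvar mevalXU moment_poly_eval mulrA -exprD.
  by rewrite subnK //; move: hS; rewrite muln0 addn0.
rewrite rmorph_sum mulr_sumr; apply: eq_bigr => i _.
rewrite !rmorphM /= /xvar mevalXU IH; last by have := ltn_ord i; lia.
by rewrite !mevalC; ring.
Qed.

Definition hankel_det_poly e N :=
  \det (\matrix_(i < N, b < N) hankel_poly (2 * N + n * e) e (i + b)%N).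

Lemma hankel_det_poly_eval e N : (hankel_det_poly e N).@[x] =
  (x (inord n) ^+ (2 * N + n * e)) ^+ N *
     \det (\matrix_(i < N, b < N) hankel_val q n cx mu e (i + b)%N).
Proof.
rewrite /hankel_det_poly -det_map_mx -detZ; congr (\det _).
apply/matrixP => i b; rewrite !mxE; apply: hankel_poly_eval.
by have := ltn_ord i; have := ltn_ord b; lia.
Qed.

Definition nondeg_poly k : P := \prod_(e < k.+1) \prod_(N < k.+2) hankel_det_poly e N.

Lemma hankel_det_neq0 k e N : (nondeg_poly k).@[x] != 0 ->
  (e <= k)%N -> (N <= k.+1)%N ->
  \det (\matrix_(i < N, b < N) hankel_val q n cx mu e (i + b)%N) != 0.
Proof.
move=> nz ek Nk; move: nz; rewrite /nondeg_poly rmorph_prod.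
move=> /prodf_neq0 /(_ (Ordinal (ek : (e < k.+1)%N)) isT); rewrite rmorph_prod.
move=> /prodf_neq0 /(_ (Ordinal (Nk : (N < k.+2)%N)) isT).
by rewrite /= hankel_det_poly_eval mulf_eq0 negb_or => /andP [].
Qed.

End HankelPolynomials.

Section Witness.
Variables (K : numFieldType) (q t : K) (n : nat).
Hypotheses (q0 : q != 0) (q_lt1 : `|q| < 1) (t0 : t != 0) (n2 : (2 <= n)%N).
Hypothesis d_lead : forall m, rec_coef q t m n != 0.

Definition wit_poly (L : nat) : {poly K} :=
  ('X - 1%:P) * ('X - (q ^+ (2 * L))%:P) * 'X^(n - 2).

Lemma wit_poly_eval L z : (wit_poly L).[z] = (z - 1) * (z - q ^+ (2 * L)) * z ^+ (n - 2).
Proof. by rewrite /wit_poly !hornerE. Qed.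

Lemma size_wit_poly L : size (wit_poly L) = n.+1.
Proof.
have XsubC_neq0 (a : K) : 'X - a%:P != 0 by rewrite -size_poly_eq0 size_XsubC.
rewrite /wit_poly size_mul ?mulf_neq0 ?XsubC_neq0 ?monic_neq0 ?monicXn //.
by rewrite size_mul ?size_XsubC ?size_polyXn //=; lia.
Qed.

Lemma wit_poly_lead L : (wit_poly L)`_n = 1.
Proof.
have := lead_coefE (wit_poly L); rewrite size_wit_poly /= => <-.
by rewrite /wit_poly !lead_coefM !lead_coefXsubC lead_coefXn !mul1r.
Qed.

Lemma wit_poly_horner L z : (wit_poly L).[z] = \sum_(i < n.+1) (wit_poly L)`_i * z ^+ i.
Proof. by rewrite horner_coef size_wit_poly. Qed.

Definition node (l : nat) : K := q ^+ (2 * l + 1).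
Definition wit_moment (L m : nat) : K := \sum_(l < L) t ^+ l * node l ^+ m.

Definition wit_point (L : nat) : 'I_(2 * n).+1 -> K :=
  fun j => if (j <= n)%N then (wit_poly L)`_j else wit_moment L (j - n.+1)%N.

Lemma wit_point_coef L i : (i <= n)%N -> wit_point L (inord i) = (wit_poly L)`_i.
Proof. by move=> hi; rewrite /wit_point inordK ?hi //; lia. Qed.

Lemma wit_point_moment L s : (s < n)%N -> wit_moment L s = wit_point L (inord (n.+1 + s)).
Proof.
move=> hs; rewrite /wit_point inordK; last by lia.
by rewrite ifF ?addKn //; apply/negbTE; rewrite -ltnNge; lia.
Qed.

Lemma node_succ l : node l.+1 = q ^+ 2 * node l.
Proof. by rewrite /node -exprD; congr (_ ^+ _); lia. Qed.

(* These moments satisfy the moment recurrence for P_L: the sum telescopes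
   in l, its end terms vanishing since P_L(1) = P_L(q^(2L)) = 0. *)
Lemma wit_moment_rec L m :
  \sum_(i < n.+1) wit_point L (inord i) * rec_coef q t m i * wit_moment L (m + i)%N = 0.
Proof.
case: L => [|L]; first by rewrite big1 // => i _; rewrite /wit_moment big_ord0 mulr0.
pose Pw := wit_poly L.+1.
have expand_l (i : 'I_n.+1) :
  wit_point L.+1 (inord i) * rec_coef q t m i * wit_moment L.+1 (m + i)%N =
  \sum_(l < L.+1) (t ^+ l * node l ^+ m) * ((q ^- 2) ^+ m * (Pw`_i * (q^-1 * node l) ^+ i)
      - t * (Pw`_i * (q * node l) ^+ i)).
  rewrite wit_point_coef ?leq_ord // /wit_moment mulr_sumr; apply: eq_bigr => l _.
  by rewrite /rec_coef exprD !exprMn; ring.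
rewrite (eq_bigr _ (fun i _ => expand_l i)) exchange_big /=.
under eq_bigr do rewrite -mulr_sumr sumrB -!mulr_sumr -!wit_poly_horner.
pose G l := t ^+ l * node l ^+ m * ((q ^- 2) ^+ m * Pw.[q^-1 * node l]).
pose F l := t ^+ l.+1 * node l ^+ m * Pw.[q * node l].
rewrite (eq_bigr (fun l : 'I_L.+1 => G l - F l)); last by move=> l _; rewrite /G /F [t ^+ l.+1]exprS /Pw; ring.
rewrite sumrB big_ord_recl big_ord_recr /=.
have -> : G 0%N = 0.
  by rewrite /G /node muln0 add0n expr1 mulVf // wit_poly_eval subrr !mul0r !mulr0.
have -> : F L = 0.
  rewrite /F /node -exprS wit_poly_eval (_ : (2 * L + 1).+1 = 2 * L.+1)%N; last by lia.
  by rewrite subrr mulr0 mul0r mulr0.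
apply/eqP; rewrite add0r addr0 subr_eq0; apply/eqP; apply: eq_bigr => l _.
rewrite /G /F /bump /= node_succ add1n.
have shift_arg : q^-1 * (q ^+ 2 * node l) = q * node l by field.
have shift_pow : (q ^+ 2 * node l) ^+ m * (q ^- 2) ^+ m = node l ^+ m.
  by rewrite exprMn mulrAC -exprMn mulfV ?expf_neq0 // expr1n mul1r.
by rewrite shift_arg mulrA -(mulrA (t ^+ l.+1)) shift_pow.
Qed.

Fixpoint wit_weight (L e l : nat) : K :=
  if e is e'.+1 then wit_weight L e' l * (wit_poly L).[q^-1 * (q ^- 2) ^+ e' * node l] else 1.

Lemma hankel_val_wit L e m :
  hankel_val q n (fun i => wit_point L (inord i)) (wit_moment L) e m =
  \sum_(l < L) t ^+ l * wit_weight L e l * node l ^+ m.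
Proof.
elim: e m => [|e IH] m /=.
  by apply: eq_bigr => l _; rewrite mulr1.
under eq_bigr => i _ do rewrite IH mulr_sumr.
rewrite exchange_big /=; apply: eq_bigr => l _.
rewrite wit_poly_horner !mulr_sumr mulr_suml; apply: eq_bigr => i _.
rewrite wit_point_coef ?leq_ord // !exprMn exprM exprD.
ring.
Qed.

Lemma node_shift l r : (r <= l)%N -> q^-1 * (q ^- 2) ^+ r * node l = q ^+ (2 * (l - r)).
Proof.
move=> rl; have E : q ^+ (2 * l) = q ^+ (2 * (l - r)) * q ^+ (2 * r).
  by rewrite -exprD; congr (_ ^+ _); lia.
rewrite /node exprD expr1 E exprVn -exprM.
have Y0 : q ^+ (2 * r) != 0 by rewrite expf_neq0.
move: (q ^+ (2 * (l - r))) (q ^+ (2 * r)) Y0 => X Y Y0.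
by field; rewrite Y0 q0.
Qed.

(* The weight of node l vanishes for l < e (a factor P_L(1) appears) and not
   for e <= l < L (the other factors avoid the roots 0, 1, q^(2L)). *)
Lemma wit_weight_eq0 L e l : (l < e)%N -> wit_weight L e l = 0.
Proof.
elim: e => // e IH hl /=; case: (ltnP l e) => h; first by rewrite IH ?mul0r.
have -> : l = e by lia.
by rewrite node_shift // subnn muln0 expr0 wit_poly_eval subrr !mul0r mulr0.
Qed.

Lemma wit_weight_neq0 L e l : (e <= l)%N -> (l < L)%N -> wit_weight L e l != 0.
Proof.
move=> el lL; elim: e el => [|e IH] el /=; first exact: oner_neq0.
rewrite mulf_neq0 ?IH //; first by lia.
rewrite node_shift; last by lia.
rewrite wit_poly_eval !mulf_neq0 ?expf_neq0 //; rewrite subr_eq0.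
  apply/eqP => h; have : (2 * (l - e) = 0)%N.
    by apply: (small_pow_inj q0 q_lt1); rewrite h expr0.
  lia.
by apply/eqP => /(small_pow_inj q0 q_lt1); lia.
Qed.

(* With L = e + N nodes, H_e(N) = V diag(t^l w_l) V^T, V the Vandermonde matrix
   of the nodes e, .., e + N - 1 (the nodes l < e have zero weight). *)
Lemma det_hankel_wit e N :
  \det (\matrix_(i < N, b < N) \sum_(l < e + N)
      t ^+ l * wit_weight (e + N) e l * node l ^+ (i + b)%N) != 0.
Proof.
pose z : 'rV[K]_N := \row_j node (e + j).
pose w : 'rV[K]_N := \row_j (t ^+ (e + j) * wit_weight (e + N) e (e + j)).
have -> : \matrix_(i < N, b < N) \sum_(l < e + N)
     t ^+ l * wit_weight (e + N) e l * node l ^+ (i + b)%N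
   = Vandermonde N z *m diag_mx w *m (Vandermonde N z)^T.
  apply/matrixP => i b; rewrite !mxE big_split_ord /= big1 ?add0r; last first.
    by move=> l _; rewrite wit_weight_eq0 ?mulr0 ?mul0r.
  apply: eq_bigr => j _; rewrite mul_mx_diag !mxE (exprD (node _)).
  ring.
have nodes_distinct : \det (Vandermonde N z) != 0.
  rewrite det_Vandermonde; apply/prodf_neq0 => i _; apply/prodf_neq0 => j ij.
  rewrite !mxE subr_eq0; apply/eqP => /(small_pow_inj q0 q_lt1) h; move: ij; lia.
rewrite !det_mulmx det_tr det_diag !mulf_neq0 //.
apply/prodf_neq0 => j _; rewrite mxE mulf_neq0 ?expf_neq0 //.
by apply: wit_weight_neq0; have := ltn_ord j; lia.
Qed.

Lemma hankel_det_poly_neq0 e N : hankel_det_poly q t n e N != 0.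
Proof.
apply/negP => /eqP D0; pose L := (e + N)%N.
have := hankel_det_poly_eval (ltnW n2) (@wit_point_moment L) (wit_moment_rec L) d_lead e N.
rewrite D0 meval0 wit_point_coef // wit_poly_lead expr1n expr1n mul1r.
move/esym/eqP; apply/negP; set M := \matrix_(i < N, b < N) _.
have -> : M = \matrix_(i < N, b < N)
    \sum_(l < e + N) t ^+ l * wit_weight (e + N) e l * node l ^+ (i + b)%N.
  by apply/matrixP => i b; rewrite !mxE hankel_val_wit.
exact: det_hankel_wit.
Qed.

Lemma nondeg_poly_neq0 k : nondeg_poly q t n k != 0.
Proof.
by apply/prodf_neq0 => e _; apply/prodf_neq0 => N _; apply: hankel_det_poly_neq0.
Qed.

End Witness.

Definition exceptional (K : fieldType) (q : K) (m : nat) : K :=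
  if m is k.+1 then q ^- (2 * k) else 0.

(* For t outside E the leading coefficients d_(m,n) of the moment recurrence
   do not vanish: d_(m,n) = 0 means t = q^(-2(m+n)). *)
Lemma rec_coef_lead_neq0 (K : fieldType) (q t : K) (n : nat) :
  q != 0 -> (forall m, t != exceptional q m) -> forall m, rec_coef q t m n != 0.
Proof.
move=> q0 t_nexc m; apply: contra (t_nexc (m + n).+1) => /eqP.
rewrite /rec_coef /= => /eqP; rewrite subr_eq0 => /eqP dE; apply/eqP.
apply: (mulIf (expf_neq0 n q0)); rewrite -dE !exprVn -exprM.
have -> : (2 * (m + n) = 2 * m + n + n)%N by lia.
by rewrite !exprD; field; rewrite !expf_neq0.
Qed.

Unset Implicit Arguments.

Theorem theorem5p6 (R : realType) (q : R[i]) (n : nat) :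
  0 < `|q| < 1 -> (2 <= n)%N ->
  exists e : nat -> R[i],
    (forall k : nat, exists m, e m = q ^- (2 * k)) /\
    forall t : R[i], (forall m, t != e m) ->
    exists p : nat -> {mpoly R[i][(2 * n).+1]},
      (forall k, p k != 0) /\
      forall x : 'I_(2 * n).+1 -> R[i],
        (forall k, (p k).@[x] != 0) ->
        x (inord n) != 0 ->
        let c := fun i : nat => x (inord i) in
        forall (A : algType R[i]) (u v Z : A),
          is_Aplus q n c u v Z ->
          forall g : A -> A, is_gt t u v Z g ->
          forall T : A -> R[i], twisted_trace g T ->
          (forall i : nat, (i < n)%N -> T (Z ^+ i) = x (inord (n.+1 + i))) ->
          trace_nondegenerate n u v Z T.
Proof.
move=> /andP [q_gt0 q_lt1] n2; have q0 : q != 0 by rewrite -normr_gt0.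
have n0 : (0 < n)%N := ltnW n2.
exists (exceptional q); split => [k|t t_nexc]; first by exists k.+1.
have t0 : t != 0 := t_nexc 0%N.
have t1 : t != 1 by have := t_nexc 1%N; rewrite /= muln0 expr0 invr1.
have q2pow k : (0 < k)%N -> (q ^+ 2) ^+ k != 1.
  by move=> k0; rewrite -exprM small_pow_neq1 // muln_gt0.
have d_lead := rec_coef_lead_neq0 n q0 t_nexc.
exists (nondeg_poly q t n); split => [k|x x_nz _ c A u v Z HA g Hg T HT Tinit k].
  exact: nondeg_poly_neq0.
apply: (trace_nondeg_on_F HA Hg HT q0 q2pow t1 t0 n0) => e N ek Nk.
apply: (hankel_det_neq0 n0 _ (moment_rec HA Hg HT q0) d_lead (x_nz k) ek Nk).
by move=> s hs; rewrite Tinit.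
Qed.
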